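(* Let $m\in(0,1]$ and let $f(x)=\sum_{k=0}^{\infty}x^ka_k$, $a_k\in\mathbb{O}$, be a slice regular function on $\mathbb{B}$ with $|f(x)|\le1$ for all $x\in\mathbb{B}$. Then $$\mathcal{C}_f(x):=|a_0|^m+\sum_{k=1}^{\infty}|x^ka_k|+\left(\frac{1}{1+|a_0|}+\frac{|x|}{1-|x|}\right)\sum_{k=1}^{\infty}|x^ka_k|^2\le1\quad\text{for all }x\in\mathbb{B}\text{ with }|x|\le R_m:=\frac{m}{2+m}.$$ The constant $R_m$ is best possible for each $m$: for every $r\in(R_m,1)$ there exist such an $f$ and $x\in\mathbb{B}$ with $|x|=r$ and $\mathcal{C}_f(x)>1$.
   Context: $\mathbb{O}$ denotes the real algebra of octonions (the 8-dimensional non-commutative, non-associative but alternative normed division algebra over $\mathbb{R}$), with modulus $|x|=\sqrt{x\overline{x}}$ equal to the Euclidean norm on $\mathbb{R}^8$; the modulus is multiplicative, $|xy|=|x||y|$. $\mathbb{B}=\{x\in\mathbb{O}:|x|<1\}$ is the open unit ball. A slice regular function on $\mathbb{B}$ is (equivalently) a function of the form $f(x)=\sum_{k=0}^{\infty}x^ka_k$ with coefficients $a_k\in\mathbb{O}$ placed on the right, the series converging for every $x\in\mathbb{B}$ (the powers $x^k$ are unambiguous since $\mathbb{O}$ is alternative). *)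

From Stdlib Require Import Reals.
From Coquelicot Require Import Coquelicot.
Open Scope R_scope.

(* Octonions built by the Cayley--Dickson construction:
   C = R x R, H = C x C, O = H x H, with
   (a,b)(c,d) = (a c - conj(d) b, d a + b conj(c)),  conj(a,b) = (conj a, -b). *)

Definition Cx := (R * R)%type.
Definition Cadd (x y : Cx) : Cx := (fst x + fst y, snd x + snd y).
Definition Copp (x : Cx) : Cx := (- fst x, - snd x).
Definition Cconj (x : Cx) : Cx := (fst x, - snd x).
Definition Cmul (x y : Cx) : Cx :=
  (fst x * fst y - snd y * snd x, snd y * fst x + snd x * fst y).
Definition Cnormsq (x : Cx) : R := fst x ^ 2 + snd x ^ 2.

Definition Hq := (Cx * Cx)%type.
Definition Hadd (x y : Hq) : Hq := (Cadd (fst x) (fst y), Cadd (snd x) (snd y)).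
Definition Hopp (x : Hq) : Hq := (Copp (fst x), Copp (snd x)).
Definition Hconj (x : Hq) : Hq := (Cconj (fst x), Copp (snd x)).
Definition Hmul (x y : Hq) : Hq :=
  (Cadd (Cmul (fst x) (fst y)) (Copp (Cmul (Cconj (snd y)) (snd x))),
   Cadd (Cmul (snd y) (fst x)) (Cmul (snd x) (Cconj (fst y)))).
Definition Hnormsq (x : Hq) : R := Cnormsq (fst x) + Cnormsq (snd x).

Definition Oct := (Hq * Hq)%type.
Definition Oadd (x y : Oct) : Oct := (Hadd (fst x) (fst y), Hadd (snd x) (snd y)).
Definition Oopp (x : Oct) : Oct := (Hopp (fst x), Hopp (snd x)).
Definition Osub (x y : Oct) : Oct := Oadd x (Oopp y).
Definition Omul (x y : Oct) : Oct :=
  (Hadd (Hmul (fst x) (fst y)) (Hopp (Hmul (Hconj (snd y)) (snd x))),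
   Hadd (Hmul (snd y) (fst x)) (Hmul (snd x) (Hconj (fst y)))).
Definition Ozero : Oct := (((0,0),(0,0)),((0,0),(0,0))).
Definition Oone : Oct := (((1,0),(0,0)),((0,0),(0,0))).

Definition Onorm (x : Oct) : R := sqrt (Hnormsq (fst x) + Hnormsq (snd x)).

(* powers x^k (unambiguous since O is alternative) *)
Fixpoint Opow (x : Oct) (k : nat) : Oct :=
  match k with O => Oone | S k' => Omul (Opow x k') x end.

Fixpoint Opsum (u : nat -> Oct) (n : nat) : Oct :=
  match n with O => u O | S n' => Oadd (Opsum u n') (u (S n')) end.

Definition Oseries_to (u : nat -> Oct) (s : Oct) : Prop :=
  is_lim_seq (fun n => Onorm (Osub (Opsum u n) s)) 0.

Definition slice_regular_ball (f : Oct -> Oct) (a : nat -> Oct) : Prop :=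
  forall x : Oct, Onorm x < 1 -> Oseries_to (fun k => Omul (Opow x k) (a k)) (f x).

Definition rpow (t m : R) : R :=
  if Req_EM_T t 0 then 0 else Rpower t m.

Definition nnseries (u : nat -> R) : Rbar := Lim_seq (fun n => sum_n u n).

Definition Cf (m : R) (a : nat -> Oct) (x : Oct) : Rbar :=
  Rbar_plus (Finite (rpow (Onorm (a O)) m))
    (Rbar_plus (nnseries (fun k => Onorm (Omul (Opow x (S k)) (a (S k)))))
       (Rbar_mult (Finite (1 / (1 + Onorm (a O)) + Onorm x / (1 - Onorm x)))
          (nnseries (fun k => (Onorm (Omul (Opow x (S k)) (a (S k)))) ^ 2)))).

From Stdlib Require Import Reals Lra Lia Psatz.
From Coquelicot Require Import Coquelicot.
Open Scope R_scope.

(* The key estimate is the Wiener-type bound |a_k| <= 1 - |a_0|^2 (k >= 1).  For an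
   imaginary unit I, the points x of the slice C_I commute with each other, so on C_I
   we may multiply f by 1 + t x^k (t in C_I) coefficientwise.  Averaging
   |(1 + t x^k) f(x)|^2 over equally spaced points of the circle |x| = r in C_I, a
   discrete Parseval identity bounds the average from below by
   |a_0|^2 + r^(2k) |a_k + t a_0|^2, while |f| <= 1 bounds it from above by
   1 + r^(2k) |t|^2.  Letting r -> 1 and taking t = a_k conj(a_0) / (1 - |a_0|^2)
   (which lies in some slice) gives the bound.  With it, C_f(x) is dominated by
   geometric series, and C_f(x) <= 1 for |x| <= m/(2+m) reduces to an elementary
   inequality in |a_0| and |x|, using |a_0|^m <= 1 - m (1 - |a_0|).
   Sharpness: for r > m/(2+m) the slice extension of the Moebius map
   (a - z)/(1 - a z) with a close enough to 1 has C_f(r) > 1. *)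
Ltac odestruct x := destruct x as [[[? ?] [? ?]] [[? ?] [? ?]]].
Ltac oring := cbv -[Rplus Rmult Ropp Rminus Rinv IZR pow sqrt Rdiv];
  repeat match goal with |- (_, _) = (_, _) => f_equal end; ring.

Definition Oscal (s : R) (x : Oct) : Oct :=
  let '(((a0, a1), (a2, a3)), ((a4, a5), (a6, a7))) := x in
  (((s * a0, s * a1), (s * a2, s * a3)), ((s * a4, s * a5), (s * a6, s * a7))).
Definition Odot (x y : Oct) : R :=
  let '(((a0, a1), (a2, a3)), ((a4, a5), (a6, a7))) := x in
  let '(((b0, b1), (b2, b3)), ((b4, b5), (b6, b7))) := y in
  a0 * b0 + a1 * b1 + a2 * b2 + a3 * b3 + a4 * b4 + a5 * b5 + a6 * b6 + a7 * b7.
Definition Onsq (x : Oct) : R := Hnormsq (fst x) + Hnormsq (snd x).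
Definition Oconj (x : Oct) : Oct :=
  let '(((a0, a1), (a2, a3)), ((a4, a5), (a6, a7))) := x in
  (((a0, - a1), (- a2, - a3)), ((- a4, - a5), (- a6, - a7))).
Definition Ore (x : Oct) : R := fst (fst (fst x)).
Definition Oim (x : Oct) : Oct := Osub x (Oscal (Ore x) Oone).

Lemma Onsq_ge0 x : 0 <= Onsq x.
Proof. odestruct x; cbv -[Rplus Rmult pow]; nra. Qed.
Lemma Onsq_dot x : Onsq x = Odot x x.
Proof. odestruct x; oring. Qed.
Lemma Onsq_mul x y : Onsq (Omul x y) = Onsq x * Onsq y.
Proof. odestruct x; odestruct y; oring. Qed.
Lemma Onsq_scal s x : Onsq (Oscal s x) = s ^ 2 * Onsq x.
Proof. odestruct x; oring. Qed.
Lemma Onsq_conj x : Onsq (Oconj x) = Onsq x.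
Proof. odestruct x; oring. Qed.
Lemma Onsq_add x y : Onsq (Oadd x y) = Onsq x + 2 * Odot x y + Onsq y.
Proof. odestruct x; odestruct y; oring. Qed.
Lemma Onsq_sub x y : Onsq (Osub x y) = Onsq x - 2 * Odot x y + Onsq y.
Proof. odestruct x; odestruct y; oring. Qed.
Lemma Onsq_eq0 x : Onsq x = 0 -> x = Ozero.
Proof.
  odestruct x; cbv -[Rplus Rmult pow]; intro H.
  repeat match goal with |- (_, _) = (_, _) => f_equal end; nra.
Qed.

Lemma Odot_sym x y : Odot x y = Odot y x.
Proof. odestruct x; odestruct y; oring. Qed.
Lemma Odot_addl x y z : Odot (Oadd x y) z = Odot x z + Odot y z.
Proof. odestruct x; odestruct y; odestruct z; oring. Qed.
Lemma Odot_scall s x y : Odot (Oscal s x) y = s * Odot x y.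
Proof. odestruct x; odestruct y; oring. Qed.
Lemma Odot_scalr s x y : Odot x (Oscal s y) = s * Odot x y.
Proof. odestruct x; odestruct y; oring. Qed.

Lemma Oadd0r x : Oadd x Ozero = x.
Proof. odestruct x; oring. Qed.
Lemma Oadd0l x : Oadd Ozero x = x.
Proof. odestruct x; oring. Qed.
Lemma Omul_addl x y z : Omul (Oadd x y) z = Oadd (Omul x z) (Omul y z).
Proof. odestruct x; odestruct y; odestruct z; oring. Qed.
Lemma Omul_addr x y z : Omul z (Oadd x y) = Oadd (Omul z x) (Omul z y).
Proof. odestruct x; odestruct y; odestruct z; oring. Qed.
Lemma Omul_scall s x y : Omul (Oscal s x) y = Oscal s (Omul x y).
Proof. odestruct x; odestruct y; oring. Qed.
Lemma Omul1l x : Omul Oone x = x.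
Proof. odestruct x; oring. Qed.
Lemma Omul0l x : Omul Ozero x = Ozero.
Proof. odestruct x; oring. Qed.
Lemma Omul0r x : Omul x Ozero = Ozero.
Proof. odestruct x; oring. Qed.
Lemma Oadd_subK x y : Oadd x (Osub y x) = y.
Proof. odestruct x; odestruct y; oring. Qed.
Lemma Osub_addK x y : Osub (Oadd x y) x = y.
Proof. odestruct x; odestruct y; oring. Qed.
Lemma Oadd_ACA x y z v : Oadd (Oadd x y) (Oadd z v) = Oadd (Oadd x z) (Oadd y v).
Proof. odestruct x; odestruct y; odestruct z; odestruct v; oring. Qed.
Lemma Osub_addl x y z : Osub (Oadd x y) z = Oadd (Osub x z) y.
Proof. odestruct x; odestruct y; odestruct z; oring. Qed.
Lemma Osubrr x : Osub x x = Ozero.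
Proof. odestruct x; oring. Qed.
Lemma Osub_split x y z : Osub x z = Oadd (Osub x y) (Osub y z).
Proof. odestruct x; odestruct y; odestruct z; oring. Qed.

Lemma Omul_conjK x y : Omul (Omul x (Oconj y)) y = Oscal (Onsq y) x.
Proof. odestruct x; odestruct y; oring. Qed.

Lemma Onorm_ge0 x : 0 <= Onorm x.
Proof. apply sqrt_pos. Qed.
Lemma Onorm_sqr x : Onorm x ^ 2 = Onsq x.
Proof. rewrite <- Rsqr_pow2; apply Rsqr_sqrt, Onsq_ge0. Qed.
Lemma Onorm_mul x y : Onorm (Omul x y) = Onorm x * Onorm y.
Proof. unfold Onorm; fold (Onsq (Omul x y)); rewrite Onsq_mul; apply sqrt_mult; apply Onsq_ge0. Qed.
Lemma Onorm_scal s x : Onorm (Oscal s x) = Rabs s * Onorm x.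
Proof.
  unfold Onorm; fold (Onsq (Oscal s x)) (Onsq x).
  rewrite Onsq_scal, sqrt_mult, <- Rsqr_pow2, sqrt_Rsqr_abs; auto using pow2_ge_0, Onsq_ge0.
Qed.
Lemma Onorm1 : Onorm Oone = 1.
Proof. unfold Onorm; cbv -[sqrt]; replace (_ + _) with 1 by ring; apply sqrt_1. Qed.
Lemma Onorm0 : Onorm Ozero = 0.
Proof. unfold Onorm; cbv -[sqrt]; replace (_ + _) with 0 by ring; apply sqrt_0. Qed.
Lemma Onorm_real r : 0 <= r -> Onorm (Oscal r Oone) = r.
Proof. intros; rewrite Onorm_scal, Onorm1, Rabs_pos_eq; lra. Qed.
Lemma Onorm_pow x n : Onorm (Opow x n) = Onorm x ^ n.
Proof. induction n; simpl; [apply Onorm1 | rewrite Onorm_mul, IHn; ring]. Qed.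
Lemma Onorm_subC x y : Onorm (Osub x y) = Onorm (Osub y x).
Proof. unfold Onorm; f_equal; odestruct x; odestruct y; oring. Qed.

Lemma Odot_sqr_le x y : Odot x y ^ 2 <= Onsq x * Onsq y.
Proof.
  destruct (Req_dec (Onsq y) 0) as [Hy | Hy].
  { apply Onsq_eq0 in Hy; subst y.
    replace (Odot x Ozero) with 0 by (odestruct x; oring).
    replace (Onsq Ozero) with 0 by oring; nra. }
  pose proof (Onsq_ge0 (Osub (Oscal (Onsq y) x) (Oscal (Odot x y) y))) as H.
  rewrite Onsq_sub, !Onsq_scal, !Odot_scall, !Odot_scalr in H.
  pose proof (Onsq_ge0 y). pose proof (Onsq_ge0 x).
  assert (0 < Onsq y) by lra.
  apply (Rmult_le_reg_l (Onsq y)); nra.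
Qed.

Lemma Odot_le x y : Odot x y <= Onorm x * Onorm y.
Proof.
  pose proof (Odot_sqr_le x y) as H; rewrite <- !Onorm_sqr in H.
  pose proof (Onorm_ge0 x); pose proof (Onorm_ge0 y).
  destruct (Rle_dec (Odot x y) 0); [nra|].
  apply Rsqr_incr_0_var; unfold Rsqr; nra.
Qed.

Lemma Onorm_triangle x y : Onorm (Oadd x y) <= Onorm x + Onorm y.
Proof.
  pose proof (Odot_le x y); pose proof (Onorm_ge0 x); pose proof (Onorm_ge0 y).
  apply Rsqr_incr_0_var; [|nra].
  rewrite Rsqr_pow2, Onorm_sqr, Onsq_add, <- !Onorm_sqr; unfold Rsqr; nra.
Qed.

Definition Oslice (I : Oct) (z : C) : Oct := Oadd (Oscal (fst z) Oone) (Oscal (snd z) I).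
Definition unit_imag (I : Oct) : Prop := Ore I = 0 /\ Onsq I = 1.

Section Slice.
Variable I : Oct.
Hypothesis HI : unit_imag I.

Lemma Oslice_mul z w : Omul (Oslice I z) (Oslice I w) = Oslice I (z * w).
Proof.
  destruct HI as [Hre Hnsq]; destruct z as [a b], w as [c d].
  enough (E : Omul (Oslice I (a, b)) (Oslice I (c, d))
              = Oslice I (a * c - b * d * Onsq I, a * d + b * c)).
  { rewrite E, Hnsq; unfold Cmult; simpl; f_equal; f_equal; ring. }
  odestruct I; cbv in Hre; subst; oring.
Qed.

(* Artin's theorem for the subalgebra generated by [I] and [v]. *)
Lemma Oslice_mulA z w v :
  Omul (Oslice I z) (Omul (Oslice I w) v) = Omul (Oslice I (z * w)) v.
Proof.
  destruct HI as [Hre Hnsq]; destruct z as [a b], w as [c d].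
  enough (E : Omul (Oslice I (a, b)) (Omul (Oslice I (c, d)) v)
              = Omul (Oslice I (a * c - b * d * Onsq I, a * d + b * c)) v).
  { rewrite E, Hnsq; unfold Cmult; simpl; do 3 f_equal; ring. }
  odestruct I; odestruct v; cbv in Hre; subst; oring.
Qed.

Lemma Oslice_nsq z : Onsq (Oslice I z) = Cmod z ^ 2.
Proof.
  destruct HI as [Hre Hnsq]; destruct z as [a b].
  enough (E : Onsq (Oslice I (a, b)) = a ^ 2 + b ^ 2 * Onsq I)
    by (rewrite E, Hnsq, Cmod2_alt; simpl; ring).
  odestruct I; cbv in Hre; subst; oring.
Qed.

Lemma Onorm_Oslice z : Onorm (Oslice I z) = Cmod z.
Proof.
  rewrite <- (sqrt_pow2 (Cmod z)) by apply Cmod_ge_0.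
  rewrite <- Oslice_nsq; reflexivity.
Qed.

Lemma Oslice_dot z w c d :
  Odot (Omul (Oslice I z) c) (Omul (Oslice I w) d)
  = (fst z * fst w + snd z * snd w) * Odot c d
    + (fst z * snd w - snd z * fst w) * Odot c (Omul I d).
Proof.
  destruct HI as [Hre Hnsq]; destruct z as [a b], w as [a' b'].
  enough (E : Odot (Omul (Oslice I (a, b)) c) (Omul (Oslice I (a', b')) d)
     = (a * a' + b * b' * Onsq I) * Odot c d + (a * b' - b * a') * Odot c (Omul I d))
    by (rewrite E, Hnsq; simpl; ring).
  odestruct I; odestruct c; odestruct d; cbv in Hre; subst; oring.
Qed.

Lemma Oslice_pow z n : Opow (Oslice I z) n = Oslice I (z ^ n).
Proof.
  induction n as [|n IHn]; simpl.
  - unfold Oslice; simpl; odestruct I; oring.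
  - rewrite IHn, Oslice_mul, Cmult_comm; reflexivity.
Qed.

End Slice.

Lemma Oslice_add I z w : Oadd (Oslice I z) (Oslice I w) = Oslice I (z + w).
Proof. destruct z, w; odestruct I; oring. Qed.
Lemma Oslice_sub I z w : Osub (Oslice I z) (Oslice I w) = Oslice I (z - w).
Proof. destruct z, w; odestruct I; oring. Qed.
Lemma Oslice1 I : Oslice I 1 = Oone.
Proof. odestruct I; oring. Qed.
Lemma Oslice_mul_real I z c : Omul (Oslice I z) (Oscal c Oone) = Oslice I (z * c).
Proof. destruct z; odestruct I; oring. Qed.

Definition Oe1 : Oct := (((0, 1), (0, 0)), ((0, 0), (0, 0))).

(* The slice through [x]; for real [x] any unit imaginary works and [Oe1] is chosen. *)
Definition slice_dir (x : Oct) : Oct :=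
  if Req_EM_T (Onorm (Oim x)) 0 then Oe1 else Oscal (/ Onorm (Oim x)) (Oim x).
Definition slice_coord (x : Oct) : C := (Ore x, Onorm (Oim x)).

Lemma slice_dir_unit x : unit_imag (slice_dir x).
Proof.
  unfold slice_dir; destruct (Req_EM_T (Onorm (Oim x)) 0) as [_ | Hx].
  - split; cbv; ring.
  - split.
    + unfold Oim; odestruct x; cbv -[Rinv sqrt Rmult Rplus Ropp Rminus pow]; ring.
    + rewrite Onsq_scal, <- Onorm_sqr; field; exact Hx.
Qed.

Lemma slice_decomp x : x = Oslice (slice_dir x) (slice_coord x).
Proof.
  unfold slice_dir, slice_coord; destruct (Req_EM_T (Onorm (Oim x)) 0) as [H0 | Hx].
  - assert (Him : Oim x = Ozero) by (apply Onsq_eq0; rewrite <- Onorm_sqr, H0; ring).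
    rewrite H0; unfold Oim in Him; odestruct x; cbv in Him |- *.
    injection Him; intros; repeat match goal with |- (_, _) = (_, _) => f_equal end; lra.
  - set (n := Onorm (Oim x)) in *; clearbody n; unfold Oslice, Oim; simpl.
    odestruct x; cbv -[Rinv Rmult Rplus Ropp Rminus].
    repeat match goal with |- (_, _) = (_, _) => f_equal end; field; exact Hx.
Qed.

Lemma Onorm_slice_coord x : Cmod (slice_coord x) = Onorm x.
Proof. rewrite (slice_decomp x) at 2; rewrite Onorm_Oslice; auto using slice_dir_unit. Qed.

Lemma sum_f_R0_swap (F : nat -> nat -> R) n m :
  sum_f_R0 (fun i => sum_f_R0 (F i) m) n = sum_f_R0 (fun j => sum_f_R0 (fun i => F i j) n) m.
Proof.
  rewrite <- sum_n_Reals, (sum_n_ext _ (fun i => sum_n (F i) m)) by (intro; symmetry; apply sum_n_Reals).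
  rewrite sum_n_switch, sum_n_Reals; apply sum_eq; intros; apply sum_n_Reals.
Qed.

Lemma sum_f_R0_single (f : nat -> R) n k :
  (k <= n)%nat -> (forall i, i <> k -> f i = 0) -> sum_f_R0 f n = f k.
Proof.
  intros Hk Hf; induction n as [|n IHn]; simpl.
  - replace k with 0%nat by lia; reflexivity.
  - destruct (Nat.eq_dec k (S n)) as [-> | Hne].
    + rewrite (sum_eq _ (fun _ => 0)), sum_cte by (intros; apply Hf; lia); ring.
    + rewrite IHn, (Hf (S n)) by (auto || lia); ring.
Qed.

Lemma sum_f_R0_two (f : nat -> R) n k :
  (0 < k <= n)%nat -> (forall i, 0 <= f i) -> f 0%nat + f k <= sum_f_R0 f n.
Proof.
  intros Hk Hf; induction n as [|n IHn]; [lia|]; simpl.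
  destruct (Nat.eq_dec k (S n)) as [-> | Hne].
  - enough (f 0%nat <= sum_f_R0 f n) by lra.
    clear - Hf; induction n as [|n IHn]; simpl; [lra | pose proof (Hf (S n)); lra].
  - pose proof (IHn ltac:(lia)); pose proof (Hf (S n)); lra.
Qed.

(* After multiplication by [2 sin (b/2)] both sums telescope. *)
Lemma sum_cos_sin_root_of_unity b M :
  sin (b / 2) <> 0 -> cos (INR (S M) * b) = 1 -> sin (INR (S M) * b) = 0 ->
  sum_f_R0 (fun j => cos (INR j * b)) M = 0 /\ sum_f_R0 (fun j => sin (INR j * b)) M = 0.
Proof.
  intros Hs Hc Hsn.
  assert (Tc : forall n, 2 * sin (b / 2) * sum_f_R0 (fun j => cos (INR j * b)) n
                         = sin (INR (S n) * b - b / 2) + sin (b / 2)).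
  { induction n as [|n IHn].
    - simpl; replace (1 * b - b / 2) with (b / 2) by field.
      rewrite Rmult_0_l, cos_0; ring.
    - rewrite tech5, Rmult_plus_distr_l, IHn, !S_INR.
      replace ((INR n + 1 + 1) * b - b / 2) with ((INR n + 1) * b + b / 2) by field.
      rewrite sin_minus, sin_plus; ring. }
  assert (Ts : forall n, 2 * sin (b / 2) * sum_f_R0 (fun j => sin (INR j * b)) n
                         = cos (b / 2) - cos (INR (S n) * b - b / 2)).
  { induction n as [|n IHn].
    - simpl; replace (1 * b - b / 2) with (b / 2) by field.
      rewrite Rmult_0_l, sin_0; ring.
    - rewrite tech5, Rmult_plus_distr_l, IHn, !S_INR.
      replace ((INR n + 1 + 1) * b - b / 2) with ((INR n + 1) * b + b / 2) by field.
      rewrite cos_minus, cos_plus; ring. }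
  specialize (Tc M); specialize (Ts M).
  rewrite sin_minus, Hc, Hsn in Tc; rewrite cos_minus, Hc, Hsn in Ts.
  split; apply (Rmult_eq_reg_l (2 * sin (b / 2))); lra.
Qed.

Lemma cos_sin_2PI_nat_diff (m n : nat) :
  cos ((INR m - INR n) * (2 * PI)) = 1 /\ sin ((INR m - INR n) * (2 * PI)) = 0.
Proof.
  assert (Hk : forall k : nat, cos (INR k * (2 * PI)) = 1 /\ sin (INR k * (2 * PI)) = 0).
  { intro k; pose proof (cos_period 0 k); pose proof (sin_period 0 k).
    rewrite Rplus_0_l, cos_0 in *; rewrite sin_0 in *.
    replace (INR k * (2 * PI)) with (2 * INR k * PI) by ring; auto. }
  destruct (Hk m) as [cm sm], (Hk n) as [cn sn].
  replace ((INR m - INR n) * (2 * PI)) with (INR m * (2 * PI) - INR n * (2 * PI)) by ring.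
  rewrite cos_minus, sin_minus, cm, sm, cn, sn; split; ring.
Qed.

Lemma sin_neq0 x : 0 < Rabs x < PI -> sin x <> 0.
Proof.
  intro Hx; destruct (Rcase_abs x) as [Hneg | Hpos].
  - rewrite Rabs_left in Hx by lra; rewrite <- (Ropp_involutive x), sin_neg.
    pose proof (sin_gt_0 (- x) ltac:(lra) ltac:(lra)); lra.
  - rewrite Rabs_pos_eq in Hx by lra; pose proof (sin_gt_0 x ltac:(lra) ltac:(lra)); lra.
Qed.

(* Orthogonality of the characters [j |-> e^{2 pi i j (m - n) / (M+1)}]. *)
Lemma sum_roots_of_unity M n m : (n <= M)%nat -> (m <= M)%nat ->
  let b := (INR m - INR n) * (2 * PI / INR (S M)) in
  sum_f_R0 (fun j => cos (INR j * b)) M = (if Nat.eq_dec n m then INR (S M) else 0) /\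
  sum_f_R0 (fun j => sin (INR j * b)) M = 0.
Proof.
  intros Hn Hm b.
  assert (HN : 0 < INR (S M)) by (apply lt_0_INR; lia).
  destruct (Nat.eq_dec n m) as [<- | Hnm].
  - unfold b; rewrite Rminus_diag, Rmult_0_l.
    rewrite (sum_eq _ (fun _ => 1)), (sum_eq (fun j => sin _) (fun _ => 0)), !sum_cte
      by (intros; rewrite Rmult_0_r; auto using cos_0, sin_0); split; ring.
  - apply sum_cos_sin_root_of_unity.
    + assert (Hd : 0 < Rabs (INR m - INR n) < INR (S M)).
      { split; [apply Rabs_pos_lt; intro E; apply Hnm, INR_eq; lra|].
        apply Rabs_def1; rewrite S_INR; pose proof (le_INR _ _ Hn); pose proof (le_INR _ _ Hm);
          pose proof (pos_INR m); pose proof (pos_INR n); lra. }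
      apply sin_neq0.
      replace (b / 2) with ((INR m - INR n) / INR (S M) * PI) by (unfold b; field; lra).
      rewrite Rabs_mult, Rabs_div, (Rabs_pos_eq (INR (S M))), (Rabs_pos_eq PI)
        by (pose proof PI_RGT_0; lra).
      pose proof PI_RGT_0.
      split; [apply Rmult_lt_0_compat; [apply Rdiv_lt_0_compat|]; lra|].
      assert (Rabs (INR m - INR n) / INR (S M) < 1)
        by (apply (Rmult_lt_reg_r (INR (S M))); [lra|]; field_simplify; lra).
      nra.
    + replace (INR (S M) * b) with ((INR m - INR n) * (2 * PI)) by (unfold b; field; lra).
      apply cos_sin_2PI_nat_diff.
    + replace (INR (S M) * b) with ((INR m - INR n) * (2 * PI)) by (unfold b; field; lra).
      apply cos_sin_2PI_nat_diff.
Qed.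

Definition Cpolar (r t : R) : C := (r * cos t, r * sin t).

Definition Oroot (I : Oct) (r : R) (M j : nat) : Oct :=
  Oslice I (Cpolar r (INR j * (2 * PI / INR (S M)))).

Lemma Cpolar_pow r t n : (Cpolar r t ^ n)%C = Cpolar (r ^ n) (INR n * t).
Proof.
  induction n as [|n IHn]; simpl Cpow.
  - unfold Cpolar; simpl; rewrite Rmult_0_l, cos_0, sin_0; unfold RtoC; f_equal; ring.
  - rewrite IHn, S_INR; unfold Cpolar, Cmult; simpl.
    rewrite Rmult_plus_distr_r, Rmult_1_l, cos_plus, sin_plus; f_equal; ring.
Qed.

Lemma Cmod_Cpolar r t : 0 <= r -> Cmod (Cpolar r t) = r.
Proof.
  intro Hr; unfold Cmod, Cpolar; cbn [fst snd].
  replace ((r * cos t) ^ 2 + (r * sin t) ^ 2) with (r ^ 2 * (Rsqr (sin t) + Rsqr (cos t)))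
    by (unfold Rsqr; ring).
  rewrite sin2_cos2, Rmult_1_r; apply sqrt_pow2, Hr.
Qed.

Lemma Onorm_Oroot I r M j : unit_imag I -> 0 <= r -> Onorm (Oroot I r M j) = r.
Proof. intros; unfold Oroot; rewrite Onorm_Oslice, Cmod_Cpolar; auto. Qed.

Lemma Odot_Opsum_l v w L : Odot (Opsum v L) w = sum_f_R0 (fun n => Odot (v n) w) L.
Proof. induction L as [|L IHL]; cbn [Opsum sum_f_R0]; [reflexivity | rewrite Odot_addl, IHL; reflexivity]. Qed.

Lemma Onsq_Opsum v L :
  Onsq (Opsum v L) = sum_f_R0 (fun n => sum_f_R0 (fun m => Odot (v n) (v m)) L) L.
Proof.
  rewrite Onsq_dot, Odot_Opsum_l; apply sum_eq; intros n _.
  rewrite Odot_sym, Odot_Opsum_l; apply sum_eq; intros; apply Odot_sym.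
Qed.

Lemma Oroot_parseval I r M L (c : nat -> Oct) : unit_imag I -> (L <= M)%nat ->
  sum_f_R0 (fun j => Onsq (Opsum (fun n => Omul (Opow (Oroot I r M j) n) (c n)) L)) M
  = INR (S M) * sum_f_R0 (fun n => r ^ (2 * n) * Onsq (c n)) L.
Proof.
  intros HI HL.
  set (b n m := (INR m - INR n) * (2 * PI / INR (S M))).
  rewrite (sum_eq _ (fun j => sum_f_R0 (fun n => sum_f_R0 (fun m =>
     r ^ n * r ^ m * (cos (INR j * b n m) * Odot (c n) (c m)
                      + sin (INR j * b n m) * Odot (c n) (Omul I (c m)))) L) L)).
  2:{ intros j _; rewrite Onsq_Opsum; apply sum_eq; intros n _; apply sum_eq; intros m _.
      unfold Oroot; rewrite !Oslice_pow, !Cpolar_pow, Oslice_dot by exact HI.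
      set (th := INR j * (2 * PI / INR (S M))).
      replace (INR j * b n m) with (INR m * th - INR n * th) by (unfold th, b; ring).
      unfold Cpolar; cbn [fst snd]; rewrite cos_minus, sin_minus; ring. }
  rewrite sum_f_R0_swap, scal_sum; apply sum_eq; intros n Hn.
  rewrite sum_f_R0_swap.
  rewrite (sum_eq _ (fun m => if Nat.eq_dec n m
                              then r ^ n * r ^ m * Odot (c n) (c m) * INR (S M) else 0)).
  2:{ intros m Hm.
      destruct (sum_roots_of_unity M n m ltac:(lia) ltac:(lia)) as [Hcos Hsin].
      fold (b n m) in Hcos, Hsin.
      rewrite (sum_eq _ (fun j => cos (INR j * b n m) * (r ^ n * r ^ m * Odot (c n) (c m))
                     + sin (INR j * b n m) * (r ^ n * r ^ m * Odot (c n) (Omul I (c m)))))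
        by (intros; ring).
      rewrite sum_plus, <- !scal_sum, Hcos, Hsin; destruct (Nat.eq_dec n m); ring. }
  rewrite (sum_f_R0_single _ L n Hn) by (intros m Hm; destruct (Nat.eq_dec n m); congruence).
  destruct (Nat.eq_dec n n) as [_ | []]; [|reflexivity].
  rewrite Onsq_dot, Nat.mul_comm, pow_mult; simpl; ring.
Qed.

Lemma Oroot_mean_one_plus I r M k w : unit_imag I -> (0 < k <= M)%nat ->
  sum_f_R0 (fun j => Onsq (Oadd Oone (Omul (Oslice I w) (Opow (Oroot I r M j) k)))) M
  = INR (S M) * (1 + r ^ (2 * k) * Cmod w ^ 2).
Proof.
  intros HI Hk; destruct w as [w1 w2].
  set (b := (INR k - INR 0) * (2 * PI / INR (S M))).
  rewrite (sum_eq _ (fun j => (1 + r ^ (2 * k) * Cmod (w1, w2) ^ 2)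
                              + cos (INR j * b) * (2 * w1 * r ^ k)
                              + sin (INR j * b) * (- 2 * w2 * r ^ k))).
  2:{ intros j _; unfold Oroot.
      rewrite Oslice_pow, Cpolar_pow, Oslice_mul, <- (Oslice1 I), Oslice_add, Oslice_nsq
        by exact HI.
      replace (INR k * (INR j * (2 * PI / INR (S M)))) with (INR j * b)
        by (unfold b; simpl; ring).
      rewrite !Cmod2_alt, Nat.mul_comm, pow_mult; unfold Cpolar; simpl.
      pose proof (sin2_cos2 (INR j * b)); unfold Rsqr in *; nra. }
  destruct (sum_roots_of_unity M 0 k ltac:(lia) ltac:(lia)) as [Hcos Hsin]; fold b in Hcos, Hsin.
  rewrite !sum_plus, <- !scal_sum, Hcos, Hsin, !sum_cte.
  destruct (Nat.eq_dec 0 k); [lia | ring].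
Qed.

Lemma Opsum_ext u v L : (forall n, (n <= L)%nat -> u n = v n) -> Opsum u L = Opsum v L.
Proof.
  induction L as [|L IHL]; simpl; intro H; [apply H; lia|].
  rewrite IHL, (H (S L)) by first [lia | intros; apply H; lia]; reflexivity.
Qed.

Lemma Opsum_add u v L : Opsum (fun n => Oadd (u n) (v n)) L = Oadd (Opsum u L) (Opsum v L).
Proof.
  induction L as [|L IHL]; cbn [Opsum]; [reflexivity | rewrite IHL; apply Oadd_ACA].
Qed.

Lemma Omul_Opsumr c u L : Omul c (Opsum u L) = Opsum (fun n => Omul c (u n)) L.
Proof. induction L as [|L IHL]; simpl; [reflexivity | rewrite Omul_addr, IHL; reflexivity]. Qed.

Lemma Opsum_zero_tail u L d : (forall n, (L < n)%nat -> u n = Ozero) -> Opsum u (L + d) = Opsum u L.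
Proof.
  intro H; induction d as [|d IHd]; [rewrite Nat.add_0_r; reflexivity|].
  rewrite Nat.add_succ_r; simpl; rewrite IHd, H by lia; apply Oadd0r.
Qed.

Lemma Opsum_shift (g : nat -> Oct) k L :
  Opsum (fun n => if (k <=? n)%nat then g (n - k)%nat else Ozero) (L + k) = Opsum g L.
Proof.
  induction L as [|L IHL].
  - destruct k as [|k]; [reflexivity|].
    cbn [Nat.add Opsum]; rewrite Nat.leb_refl, Nat.sub_diag, (Opsum_ext _ (fun _ => Ozero)).
    + replace (Opsum (fun _ => Ozero) k) with Ozero; [apply Oadd0l|].
      clear; induction k as [|k IHk]; cbn [Opsum]; [reflexivity|].
      rewrite <- IHk; symmetry; apply Oadd0r.
    + intros n Hn; replace (S k <=? n)%nat with false by (symmetry; apply Nat.leb_gt; lia).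
      reflexivity.
  - replace (S L + k)%nat with (S (L + k)) by lia; cbn [Opsum]; rewrite IHL.
    replace (k <=? S (L + k))%nat with true by (symmetry; apply Nat.leb_le; lia).
    replace (S (L + k) - k)%nat with (S L) by lia; reflexivity.
Qed.

Definition Otrunc (a : nat -> Oct) (L n : nat) : Oct := if (n <=? L)%nat then a n else Ozero.

(* Coefficients of [(1 + t X^k) (a_0 + a_1 X + ... + a_L X^L)], with [X] to the left of
   the coefficients and [t] commuting with [X]. *)
Definition binom_mul_coef (a : nat -> Oct) (t : Oct) (k L n : nat) : Oct :=
  Oadd (Otrunc a L n) (if (k <=? n)%nat then Omul t (Otrunc a L (n - k)) else Ozero).

Lemma binom_mul_coef_0 a t k L : (0 < k)%nat -> binom_mul_coef a t k L 0 = a 0%nat.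
Proof.
  intro Hk; unfold binom_mul_coef, Otrunc; simpl.
  replace (k <=? 0)%nat with false by (symmetry; apply Nat.leb_gt; lia); apply Oadd0r.
Qed.

Lemma binom_mul_coef_k a t k L : (k <= L)%nat ->
  binom_mul_coef a t k L k = Oadd (a k) (Omul t (a 0%nat)).
Proof.
  intro Hk; unfold binom_mul_coef, Otrunc; rewrite Nat.leb_refl, Nat.sub_diag.
  replace (k <=? L)%nat with true by (symmetry; apply Nat.leb_le; lia); reflexivity.
Qed.

Section Binomial.
Variables (I : Oct) (z w : C).
Hypothesis HI : unit_imag I.
Let x := Oslice I z.
Let t := Oslice I w.

Lemma Opow_shift m k v : Omul (Opow x (m + k)) (Omul t v) = Omul (Omul t (Opow x k)) (Omul (Opow x m) v).
Proof.
  unfold x, t; rewrite !Oslice_pow, Oslice_mul, !Oslice_mulA, Cpow_add_r by exact HI.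
  f_equal; f_equal; ring.
Qed.

Lemma Opsum_binom_mul k L a :
  Omul (Oadd Oone (Omul t (Opow x k))) (Opsum (fun n => Omul (Opow x n) (a n)) L)
  = Opsum (fun n => Omul (Opow x n) (binom_mul_coef a t k L n)) (L + k).
Proof.
  rewrite Omul_addl, Omul1l.
  rewrite (Opsum_ext (fun n => Omul (Opow x n) (binom_mul_coef a t k L n))
                     (fun n => Oadd (Omul (Opow x n) (Otrunc a L n))
     (if (k <=? n)%nat then Omul (Opow x ((n - k) + k)) (Omul t (Otrunc a L (n - k))) else Ozero))).
  2:{ intros n _; unfold binom_mul_coef; rewrite Omul_addr; f_equal.
      destruct (k <=? n)%nat eqn:E; [|apply Omul0r].
      apply Nat.leb_le in E; replace (n - k + k)%nat with n by lia; reflexivity. }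
  rewrite Opsum_add; f_equal.
  - rewrite Opsum_zero_tail.
    + apply Opsum_ext; intros n Hn; unfold Otrunc.
      replace (n <=? L)%nat with true by (symmetry; apply Nat.leb_le; lia); reflexivity.
    + intros n Hn; unfold Otrunc.
      replace (n <=? L)%nat with false by (symmetry; apply Nat.leb_gt; lia); apply Omul0r.
  - rewrite (Opsum_shift (fun m => Omul (Opow x (m + k)) (Omul t (Otrunc a L m)))).
    rewrite Omul_Opsumr; apply Opsum_ext; intros n Hn; unfold Otrunc.
    replace (n <=? L)%nat with true by (symmetry; apply Nat.leb_le; lia).
    symmetry; apply Opow_shift.
Qed.

End Binomial.

Lemma pow_le_one x n : 0 <= x <= 1 -> x ^ n <= 1.
Proof. intro Hx; rewrite <- (pow1 n); apply pow_incr; exact Hx. Qed.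

Lemma Onorm_sub_le x y s : Onorm (Osub x y) <= Onorm (Osub x s) + Onorm (Osub y s).
Proof. rewrite (Osub_split x s y), (Onorm_subC y s); apply Onorm_triangle. Qed.

Lemma Oseries_to_eventually u s eps : Oseries_to u s -> 0 < eps ->
  exists N, forall n, (N <= n)%nat -> Onorm (Osub (Opsum u n) s) < eps.
Proof.
  intros Hu He; apply is_lim_seq_spec in Hu; destruct (Hu (mkposreal eps He)) as [N HN].
  exists N; intros n Hn; specialize (HN n Hn); simpl in HN.
  rewrite Rminus_0_r, Rabs_pos_eq in HN by apply Onorm_ge0; exact HN.
Qed.

Lemma slice_regular_coef_bound f a r : slice_regular_ball f a -> 0 < r < 1 ->
  exists n0, forall n, (n0 <= n)%nat -> Onorm (a n) * r ^ n <= 1.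
Proof.
  intros Hf Hr; set (x := Oscal r Oone).
  assert (Hx : Onorm x = r) by (apply Onorm_real; lra).
  destruct (Oseries_to_eventually _ _ (1 / 2) (Hf x ltac:(lra)) ltac:(lra)) as [N HN].
  exists (S N); intros [|p] Hp; [lia|].
  set (u k := Omul (Opow x k) (a k)).
  pose proof (Onorm_sub_le (Opsum u (S p)) (Opsum u p) (f x)) as H.
  cbn [Opsum] in H; rewrite Osub_addK in H; unfold u in H.
  rewrite Onorm_mul, Onorm_pow, Hx in H.
  pose proof (HN (S p) ltac:(lia)); pose proof (HN p ltac:(lia)); cbn [Opsum] in *; lra.
Qed.

Lemma Opsum_geometric_tail (u : nat -> Oct) L q : 0 <= q < 1 ->
  (forall n, (L < n)%nat -> Onorm (u n) <= q ^ n) ->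
  forall d, Onorm (Osub (Opsum u (L + d)) (Opsum u L)) <= (q ^ S L - q ^ S (L + d)) / (1 - q).
Proof.
  intros Hq Hu d; induction d as [|d IHd].
  - rewrite Nat.add_0_r, Osubrr, Onorm0; right; field; lra.
  - rewrite Nat.add_succ_r; cbn [Opsum]; rewrite Osub_addl.
    eapply Rle_trans; [apply Onorm_triangle|].
    pose proof (Hu (S (L + d)) ltac:(lia)).
    replace ((q ^ S L - q ^ S (S (L + d))) / (1 - q))
      with ((q ^ S L - q ^ S (L + d)) / (1 - q) + q ^ S (L + d)) by (simpl; field; lra).
    lra.
Qed.

Lemma slice_regular_trunc_err f a x L q : slice_regular_ball f a -> Onorm x < 1 -> 0 <= q < 1 ->
  (forall n, (L < n)%nat -> Onorm (Omul (Opow x n) (a n)) <= q ^ n) ->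
  Onorm (Osub (Opsum (fun n => Omul (Opow x n) (a n)) L) (f x)) <= q ^ S L / (1 - q).
Proof.
  intros Hf Hx Hq Hb; apply Rle_plus_epsilon; intros eps He.
  destruct (Oseries_to_eventually _ _ eps (Hf x Hx) He) as [N HN].
  set (u n := Omul (Opow x n) (a n)).
  pose proof (Opsum_geometric_tail u L q Hq Hb N) as Htail.
  pose proof (HN (L + N)%nat ltac:(lia)) as Hconv; fold u in Hconv.
  pose proof (Onorm_sub_le (Opsum u L) (f x) (Opsum u (L + N))) as H.
  rewrite (Onorm_subC (Opsum u L) (Opsum u (L + N))), (Onorm_subC (f x) (Opsum u (L + N))) in H.
  assert (0 <= q ^ S (L + N) / (1 - q)) by (apply Rdiv_le_0_compat; [apply pow_le|]; lra).
  assert ((q ^ S L - q ^ S (L + N)) / (1 - q) = q ^ S L / (1 - q) - q ^ S (L + N) / (1 - q))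
    by (field; lra).
  lra.
Qed.

Lemma Onsq_mul_perturb W P F K T :
  Onorm W <= K -> Onorm F <= 1 -> Onorm (Osub P F) <= T -> 0 <= T ->
  Onsq (Omul W P) <= Onsq W + (2 * K * K * T + K * K * T * T).
Proof.
  intros HW HF HP HT.
  assert (HWP : Onorm (Omul W P) <= Onorm W + K * T).
  { replace P with (Oadd F (Osub P F)) by apply Oadd_subK.
    rewrite Omul_addr; eapply Rle_trans; [apply Onorm_triangle|]; rewrite !Onorm_mul.
    pose proof (Onorm_ge0 W); pose proof (Onorm_ge0 F); pose proof (Onorm_ge0 (Osub P F)).
    apply Rplus_le_compat; [nra | apply Rmult_le_compat; lra]. }
  rewrite <- !Onorm_sqr.
  pose proof (Onorm_ge0 W); pose proof (Onorm_ge0 (Omul W P)).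
  apply Rle_trans with ((Onorm W + K * T) ^ 2); [apply pow_incr; lra|].
  assert (Onorm W * (K * T) <= K * (K * T)) by (apply Rmult_le_compat_r; nra).
  nra.
Qed.

(* The averaging argument at radius [r], with [f] replaced by its Taylor polynomial of
   degree [L]; [T] bounds the truncation error on the circle. *)
Lemma wiener_truncated f a k I w r q L :
  slice_regular_ball f a -> (forall x, Onorm x < 1 -> Onorm (f x) <= 1) ->
  (1 <= k <= L)%nat -> unit_imag I -> 0 < r < 1 -> 0 <= q < 1 ->
  (forall x n, Onorm x = r -> (L < n)%nat -> Onorm (Omul (Opow x n) (a n)) <= q ^ n) ->
  let t := Oslice I w in let K := 1 + Cmod w in let T := q ^ S L / (1 - q) in
  Onsq (a 0%nat) + r ^ (2 * k) * Onsq (Oadd (a k) (Omul t (a 0%nat)))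
  <= 1 + r ^ (2 * k) * Cmod w ^ 2 + (2 * K * K * T + K * K * T * T).
Proof.
  intros Hf Hb Hk HI Hr Hq Hd t K T.
  set (M := (L + k)%nat).
  assert (HM : 0 < INR (S M)) by (apply lt_0_INR; lia).
  assert (HT : 0 <= T) by (apply Rdiv_le_0_compat; [apply pow_le|]; lra).
  set (W j := Oadd Oone (Omul t (Opow (Oroot I r M j) k))).
  set (P j := Opsum (fun n => Omul (Opow (Oroot I r M j) n) (a n)) L).
  assert (Hupper : forall j, Onsq (Omul (W j) (P j)) <= Onsq (W j) + (2 * K * K * T + K * K * T * T)).
  { intro j; assert (Hx : Onorm (Oroot I r M j) = r) by (apply Onorm_Oroot; auto; lra).
    apply Onsq_mul_perturb with (F := f (Oroot I r M j)).
    - unfold W, t, K; eapply Rle_trans; [apply Onorm_triangle|].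
      rewrite Onorm1, Onorm_mul, Onorm_pow, Onorm_Oslice, Hx by exact HI.
      pose proof (Cmod_ge_0 w); pose proof (pow_le_one r k ltac:(lra)); pose proof (pow_le r k); nra.
    - apply Hb; lra.
    - apply slice_regular_trunc_err; auto; lra.
    - exact HT. }
  assert (Hsum : INR (S M) * sum_f_R0 (fun n => r ^ (2 * n) * Onsq (binom_mul_coef a t k L n)) M
                 <= INR (S M) * (1 + r ^ (2 * k) * Cmod w ^ 2 + (2 * K * K * T + K * K * T * T))).
  { rewrite <- (Oroot_parseval I r M M (binom_mul_coef a t k L)) by (auto; lia).
    rewrite (sum_eq _ (fun j => Onsq (Omul (W j) (P j))))
      by (intros j _; unfold W, P, t, Oroot; rewrite Opsum_binom_mul by exact HI; reflexivity).
    rewrite Rmult_plus_distr_l, <- (Oroot_mean_one_plus I r M k w HI) by lia.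
    rewrite (Rmult_comm (INR (S M))), <- sum_cte, <- sum_plus.
    apply sum_Rle; intros; apply Hupper. }
  apply Rmult_le_reg_l in Hsum; [|exact HM].
  eapply Rle_trans; [|exact Hsum].
  rewrite <- (binom_mul_coef_k a t k L), <- (binom_mul_coef_0 a t k L) by lia.
  replace (Onsq (binom_mul_coef a t k L 0)) with (r ^ (2 * 0) * Onsq (binom_mul_coef a t k L 0))
    by (simpl; ring).
  apply (sum_f_R0_two (fun n => r ^ (2 * n) * Onsq (binom_mul_coef a t k L n))); [lia|].
  intro n; apply Rmult_le_pos; [apply pow_le; lra | apply Onsq_ge0].
Qed.

Lemma le_of_geometric_error A B K q L0 : 0 <= q < 1 ->
  (forall L, (L0 <= L)%nat ->
     A <= B + (2 * K * K * (q ^ S L / (1 - q)) + K * K * (q ^ S L / (1 - q)) * (q ^ S L / (1 - q)))) ->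
  A <= B.
Proof.
  intros Hq H; apply Rle_plus_epsilon; intros eps He.
  set (m := Rmin 1 (eps / (3 * K * K + 1))).
  assert (Hm : 0 < m) by (apply Rmin_pos; [lra | apply Rdiv_lt_0_compat; nra]).
  assert (Hm1 : m <= 1) by apply Rmin_l.
  assert (Hme : (3 * K * K + 1) * m <= eps).
  { apply Rle_trans with ((3 * K * K + 1) * (eps / (3 * K * K + 1)));
      [apply Rmult_le_compat_l; [nra | apply Rmin_r] | right; field; nra]. }
  destruct (pow_lt_1_zero q ltac:(rewrite Rabs_pos_eq; lra) ((1 - q) * m) ltac:(nra)) as [N HN].
  specialize (H (Nat.max L0 N) ltac:(lia)).
  specialize (HN (S (Nat.max L0 N)) ltac:(lia)); rewrite Rabs_pos_eq in HN by (apply pow_le; lra).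
  set (T := q ^ S (Nat.max L0 N) / (1 - q)) in H.
  assert (HT : 0 <= T < m).
  { unfold T; split; [apply Rdiv_le_0_compat; [apply pow_le|]; lra|].
    apply (Rmult_lt_reg_r (1 - q)); [lra|]; field_simplify; lra. }
  assert (HKK : 0 <= K * K) by nra.
  assert (K * K * T * T <= K * K * T)
    by (rewrite <- (Rmult_1_r (K * K * T)) at 2; apply Rmult_le_compat_l; nra).
  assert (K * K * T <= K * K * m) by (apply Rmult_le_compat_l; lra).
  nra.
Qed.

Lemma bernoulli_le h n : 0 <= h <= 1 -> 1 - INR n * h <= (1 - h) ^ n.
Proof.
  intro Hh; induction n as [|n IHn]; [simpl; lra|].
  rewrite S_INR; simpl; pose proof (pos_INR n); pose proof (pow_le (1 - h) n ltac:(lra)); nra.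
Qed.

Lemma le_of_radius_limit A D n : (forall r, 0 < r < 1 -> A + r ^ n * D <= 1) -> A + D <= 1.
Proof.
  intro H; destruct (Rle_dec D 0) as [HD | HD].
  - specialize (H (1 / 2) ltac:(lra)); pose proof (pow_le_one (1 / 2) n ltac:(lra)); nra.
  - apply Rle_plus_epsilon; intros eps He.
    set (h := Rmin (1 / 2) (eps / (INR n * D + 1))).
    pose proof (pos_INR n).
    assert (Hh : 0 < h) by (apply Rmin_pos; [lra | apply Rdiv_lt_0_compat; nra]).
    assert (Hh1 : h <= 1 / 2) by apply Rmin_l.
    assert (Hhe : (INR n * D + 1) * h <= eps).
    { apply Rle_trans with ((INR n * D + 1) * (eps / (INR n * D + 1)));
        [apply Rmult_le_compat_l; [nra | apply Rmin_r] | right; field; nra]. }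
    specialize (H (1 - h) ltac:(lra)); pose proof (bernoulli_le h n ltac:(lra)); nra.
Qed.

Lemma wiener_slice_radius f a k I w r :
  slice_regular_ball f a -> (forall x, Onorm x < 1 -> Onorm (f x) <= 1) ->
  (1 <= k)%nat -> unit_imag I -> 0 < r < 1 ->
  Onsq (a 0%nat) + r ^ (2 * k) * Onsq (Oadd (a k) (Omul (Oslice I w) (a 0%nat)))
  <= 1 + r ^ (2 * k) * Cmod w ^ 2.
Proof.
  intros Hf Hb Hk HI Hr.
  set (r' := (1 + r) / 2).
  destruct (slice_regular_coef_bound f a r' Hf ltac:(unfold r'; lra)) as [n0 Hn0].
  set (q := r / r').
  assert (Hq : 0 <= q < 1).
  { unfold q, r'; split; [apply Rdiv_le_0_compat; lra|].
    apply (Rmult_lt_reg_r ((1 + r) / 2)); [lra|]; field_simplify; lra. }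
  apply (le_of_geometric_error _ _ (1 + Cmod w) q (Nat.max n0 k) Hq); intros L HL.
  apply (wiener_truncated f a k I w r q L); auto; [lia|].
  intros x n Hx Hn; rewrite Onorm_mul, Onorm_pow, Hx.
  replace r with (q * r') at 1 by (unfold q, r'; field; lra).
  rewrite Rpow_mult_distr.
  pose proof (Hn0 n ltac:(lia)); pose proof (pow_le q n (proj1 Hq)); pose proof (Onorm_ge0 (a n)).
  nra.
Qed.

Lemma wiener_shift f a k t :
  slice_regular_ball f a -> (forall x, Onorm x < 1 -> Onorm (f x) <= 1) -> (1 <= k)%nat ->
  Onsq (a 0%nat) + Onsq (Oadd (a k) (Omul t (a 0%nat))) <= 1 + Onsq t.
Proof.
  intros Hf Hb Hk.
  rewrite (slice_decomp t), Oslice_nsq by apply slice_dir_unit.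
  set (I := slice_dir t); set (w := slice_coord t).
  enough (Onsq (a 0%nat) + (Onsq (Oadd (a k) (Omul (Oslice I w) (a 0%nat))) - Cmod w ^ 2) <= 1)
    by lra.
  apply (le_of_radius_limit _ _ (2 * k)); intros r Hr.
  pose proof (wiener_slice_radius f a k I w r Hf Hb Hk (slice_dir_unit t) Hr); lra.
Qed.

Lemma slice_regular_wiener f a k :
  slice_regular_ball f a -> (forall x, Onorm x < 1 -> Onorm (f x) <= 1) -> (1 <= k)%nat ->
  Onorm (a k) <= 1 - Onorm (a 0%nat) ^ 2.
Proof.
  intros Hf Hb Hk.
  pose proof (Onorm_ge0 (a 0%nat)) as Hal0; pose proof (Onorm_ge0 (a k)) as Hb0.
  set (al := Onorm (a 0%nat)) in *; set (b := Onorm (a k)) in *.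
  pose proof (wiener_shift f a k Ozero Hf Hb Hk) as H0.
  rewrite Omul0l, Oadd0r, <- !Onorm_sqr, Onorm0 in H0; fold al b in H0.
  destruct (Req_dec al 1) as [E | E]; [rewrite E in H0 |- *; nra|].
  assert (Hal : al < 1) by nra.
  (* the optimal shift [t = a_k conj(a_0) / (1 - |a_0|^2)] *)
  set (lam := / (1 - al ^ 2)).
  assert (Hlam : lam * (1 - al ^ 2) = 1) by (apply Rinv_l, Rgt_not_eq; nra).
  pose proof (wiener_shift f a k (Oscal lam (Omul (a k) (Oconj (a 0%nat)))) Hf Hb Hk) as H1.
  rewrite Omul_scall, Omul_conjK, Onsq_scal, Onsq_mul, Onsq_conj in H1.
  replace (Oadd (a k) (Oscal lam (Oscal (Onsq (a 0%nat)) (a k))))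
    with (Oscal (1 + lam * Onsq (a 0%nat)) (a k)) in H1 by (odestruct (a k); oring).
  rewrite Onsq_scal, <- !Onorm_sqr in H1; fold al b in H1.
  replace (1 + lam * al ^ 2) with lam in H1 by nra.
  assert (lam ^ 2 * b ^ 2 * (1 - al ^ 2) <= 1 - al ^ 2) by nra.
  assert (Hlb : lam * b <= 1).
  { assert (lam ^ 2 * b ^ 2 <= 1) by (apply (Rmult_le_reg_r (1 - al ^ 2)); nra).
    assert (0 < lam) by (unfold lam; apply Rinv_0_lt_compat; nra). nra. }
  replace b with (lam * b * (1 - al ^ 2))
    by (transitivity (lam * (1 - al ^ 2) * b); [ring | rewrite Hlam; ring]).
  nra.
Qed.

Lemma ln_le_sub_one t : 0 < t -> ln t <= t - 1.
Proof.
  intro Ht; rewrite <- (ln_exp (t - 1)).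
  apply ln_le; [exact Ht | pose proof (exp_ineq1_le (t - 1)); lra].
Qed.

Lemma rpow_le_tangent al m : 0 <= al <= 1 -> 0 < m <= 1 -> rpow al m <= 1 - m * (1 - al).
Proof.
  intros Ha Hm; unfold rpow; destruct (Req_EM_T al 0) as [_ | Hal0]; [nra|].
  set (M := 1 - m * (1 - al)); assert (HM : 0 < M) by (unfold M; nra).
  unfold Rpower; rewrite <- (exp_ln M HM).
  enough (m * ln al <= ln M) by (destruct (Req_dec (m * ln al) (ln M)) as [-> | Hne];
                                 [lra | left; apply exp_increasing; lra]).
  (* weighted sum of [ln t <= t - 1] at [t = al / M] and [t = 1 / M] *)
  pose proof (ln_le_sub_one (al / M) ltac:(apply Rdiv_lt_0_compat; lra)) as H1.
  pose proof (ln_le_sub_one (1 / M) ltac:(apply Rdiv_lt_0_compat; lra)) as H2.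
  rewrite ln_div in H1, H2 by lra; rewrite ln_1 in H2.
  assert (HM0 : M <> 0) by lra.
  assert (m * (al / M - 1) + (1 - m) * (1 / M - 1) = 0) by (unfold M in *; field; exact HM0).
  assert (m * (ln al - ln M) <= m * (al / M - 1)) by (apply Rmult_le_compat_l; lra).
  assert ((1 - m) * (0 - ln M) <= (1 - m) * (1 / M - 1)) by (apply Rmult_le_compat_l; lra).
  lra.
Qed.

Lemma nnseries_geom_bound (c : nat -> R) K q : 0 <= q < 1 -> 0 <= K ->
  (forall n, 0 <= c n <= K * q ^ S n) ->
  exists S, nnseries c = Finite S /\ 0 <= S <= K * q / (1 - q).
Proof.
  intros Hq HK Hc.
  assert (Hg : is_series (fun n => K * q ^ S n) (K * q / (1 - q))).
  { replace (K * q / (1 - q)) with (/ (1 - q) * (K * q)) by (field; lra).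
    apply (is_series_ext (fun n => q ^ n * (K * q))); [intros; simpl; ring|].
    apply is_series_scal_r, is_series_geom; rewrite Rabs_pos_eq; lra. }
  assert (Hex : ex_series c).
  { apply (ex_series_le c (fun n => K * q ^ S n)); [|eexists; exact Hg].
    intro n; unfold norm; simpl; rewrite Rabs_pos_eq; apply Hc. }
  exists (Series c); split; [apply is_lim_seq_unique, Series_correct, Hex|split].
  - replace 0 with (0 * Series c) by ring; rewrite <- Series_scal_l.
    apply Series_le; [intro n; rewrite Rmult_0_l; split; [lra | apply Hc] | exact Hex].
  - rewrite <- (is_series_unique _ _ Hg); apply Series_le; [exact Hc | eexists; exact Hg].
Qed.

Lemma nnseries_sq_geom_bound (c : nat -> R) K q : 0 <= q < 1 -> 0 <= K ->
  (forall n, 0 <= c n <= K * q ^ S n) ->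
  exists S, nnseries (fun n => c n ^ 2) = Finite S /\ 0 <= S <= K ^ 2 * q ^ 2 / (1 - q ^ 2).
Proof.
  intros Hq HK Hc; apply nnseries_geom_bound; [split; nra | apply pow2_ge_0|].
  intro n; split; [apply pow2_ge_0|].
  rewrite <- pow_mult, Nat.mul_comm, pow_mult, <- Rpow_mult_distr.
  apply pow_incr, Hc.
Qed.

Lemma Cf_finite m a x S1 S2 :
  nnseries (fun k => Onorm (Omul (Opow x (S k)) (a (S k)))) = Finite S1 ->
  nnseries (fun k => Onorm (Omul (Opow x (S k)) (a (S k))) ^ 2) = Finite S2 ->
  Cf m a x = Finite (rpow (Onorm (a 0%nat)) m + S1
                     + (1 / (1 + Onorm (a 0%nat)) + Onorm x / (1 - Onorm x)) * S2).
Proof. intros H1 H2; unfold Cf; rewrite H1, H2; simpl; f_equal; ring. Qed.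

Lemma bohr_radius_bounds m r : 0 < m <= 1 -> 0 <= r <= m / (2 + m) ->
  r <= 1 / 3 /\ r / (1 - r) <= m / 2 /\ r ^ 2 / (1 - r ^ 2) <= m ^ 2 / (4 * (1 + m)).
Proof.
  intros Hm [Hr HR].
  assert (HR' : r * (2 + m) <= m).
  { apply (Rmult_le_compat_r (2 + m)) in HR; [|lra].
    replace (m / (2 + m) * (2 + m)) with m in HR by (field; lra); lra. }
  assert (Hr3 : r <= 1 / 3) by (pose proof (Rmult_le_compat_l r (2 + m) 3); nra).
  split; [exact Hr3 | split].
  - apply (Rmult_le_reg_r (1 - r)); [lra|]; field_simplify; nra.
  - assert (Hr2 : 0 < 1 - r ^ 2) by nra.
    assert ((r * (2 + m)) ^ 2 <= m ^ 2) by (apply pow_incr; nra).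
    apply (Rmult_le_reg_r ((1 - r ^ 2) * (4 * (1 + m)))); [nra|].
    replace (r ^ 2 / (1 - r ^ 2) * ((1 - r ^ 2) * (4 * (1 + m)))) with (4 * (1 + m) * r ^ 2)
      by (field; lra).
    replace (m ^ 2 / (4 * (1 + m)) * ((1 - r ^ 2) * (4 * (1 + m)))) with (m ^ 2 * (1 - r ^ 2))
      by (field; lra).
    nra.
Qed.

Lemma bohr_majorant_core m e : 0 < m <= 1 -> 0 <= e <= 1 ->
  - m * e + e * (2 - e) * (m / 2)
  + (1 / (2 - e) + m / 2) * (e * (2 - e)) ^ 2 * (m ^ 2 / (4 * (1 + m))) <= 0.
Proof.
  intros Hm He.
  replace ((1 / (2 - e) + m / 2) * (e * (2 - e)) ^ 2)
    with (e ^ 2 * (2 - e) + m / 2 * e ^ 2 * (2 - e) ^ 2) by (field; lra).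
  assert (X : e ^ 2 * (2 - e) + m / 2 * e ^ 2 * (2 - e) ^ 2 <= e ^ 2 * (2 + 2 * m)).
  { assert (e ^ 2 * (2 - e) <= e ^ 2 * 2) by (apply Rmult_le_compat_l; nra).
    assert (m / 2 * e ^ 2 * (2 - e) ^ 2 <= m / 2 * e ^ 2 * 4) by (apply Rmult_le_compat_l; nra).
    lra. }
  assert (Y : (e ^ 2 * (2 - e) + m / 2 * e ^ 2 * (2 - e) ^ 2) * (m ^ 2 / (4 * (1 + m)))
              <= m ^ 2 * e ^ 2 / 2).
  { replace (m ^ 2 * e ^ 2 / 2) with (e ^ 2 * (2 + 2 * m) * (m ^ 2 / (4 * (1 + m))))
      by (field; lra).
    apply Rmult_le_compat_r; [apply Rdiv_le_0_compat; nra | exact X]. }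
  assert (m ^ 2 * e ^ 2 <= m * e ^ 2) by nra.
  nra.
Qed.

(* The majorant of [C_f(x)] obtained from [|a_k| <= 1 - |a_0|^2], with [al = |a_0|]
   and [r = |x|]. *)
Lemma bohr_majorant_le_one m al r : 0 < m <= 1 -> 0 <= al <= 1 -> 0 <= r <= m / (2 + m) ->
  rpow al m + (1 - al ^ 2) * r / (1 - r)
  + (1 / (1 + al) + r / (1 - r)) * ((1 - al ^ 2) ^ 2 * r ^ 2 / (1 - r ^ 2)) <= 1.
Proof.
  intros Hm Ha Hr.
  destruct (bohr_radius_bounds m r Hm Hr) as [Hr3 [A1 A2]].
  pose proof (rpow_le_tangent al m Ha Hm) as Hpow.
  pose proof (bohr_majorant_core m (1 - al) Hm ltac:(lra)) as Hcore.
  replace (2 - (1 - al)) with (1 + al) in Hcore by ring.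
  replace ((1 - al) * (1 + al)) with (1 - al ^ 2) in Hcore by ring.
  assert (Hal2 : 0 <= 1 - al ^ 2) by nra.
  assert (B1 : (1 - al ^ 2) * r / (1 - r) <= (1 - al ^ 2) * (m / 2)).
  { unfold Rdiv; rewrite Rmult_assoc; apply Rmult_le_compat_l; [exact Hal2 | exact A1]. }
  assert (B2 : (1 / (1 + al) + r / (1 - r)) * ((1 - al ^ 2) ^ 2 * r ^ 2 / (1 - r ^ 2))
               <= (1 / (1 + al) + m / 2) * (1 - al ^ 2) ^ 2 * (m ^ 2 / (4 * (1 + m)))).
  { assert (0 <= r / (1 - r)) by (apply Rdiv_le_0_compat; lra).
    assert (0 <= r ^ 2 / (1 - r ^ 2)) by (apply Rdiv_le_0_compat; nra).
    assert (0 <= 1 / (1 + al)) by (apply Rdiv_le_0_compat; lra).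
    assert (0 <= (1 - al ^ 2) ^ 2) by apply pow2_ge_0.
    unfold Rdiv at 3; rewrite Rmult_assoc, (Rmult_assoc (_ + m / 2)).
    apply Rmult_le_compat; [lra | apply Rmult_le_pos; lra | lra |].
    apply Rmult_le_compat_l; lra. }
  lra.
Qed.

Lemma bohr_inequality m f a x : 0 < m <= 1 ->
  slice_regular_ball f a -> (forall y, Onorm y < 1 -> Onorm (f y) <= 1) ->
  Onorm x <= m / (2 + m) -> Rbar_le (Cf m a x) (Finite 1).
Proof.
  intros Hm Hf Hb HR.
  pose proof (Onorm_ge0 x) as Hr; pose proof (Onorm_ge0 (a 0%nat)) as Hal.
  set (r := Onorm x) in *; set (al := Onorm (a 0%nat)) in *.
  assert (Hw : forall n, Onorm (a (S n)) <= 1 - al ^ 2)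
    by (intro n; apply (slice_regular_wiener f); auto; lia).
  assert (Hal1 : al <= 1) by (pose proof (Hw 0%nat); pose proof (Onorm_ge0 (a 1%nat)); nra).
  destruct (bohr_radius_bounds m r Hm (conj Hr HR)) as [Hr3 _].
  set (c n := Onorm (Omul (Opow x (S n)) (a (S n)))).
  assert (Hc : forall n, 0 <= c n <= (1 - al ^ 2) * r ^ S n).
  { intro n; unfold c; rewrite Onorm_mul, Onorm_pow; fold r.
    pose proof (Hw n); pose proof (Onorm_ge0 (a (S n))); pose proof (pow_le r (S n) Hr).
    split; [nra | rewrite Rmult_comm; apply Rmult_le_compat_r; auto]. }
  destruct (nnseries_geom_bound c (1 - al ^ 2) r ltac:(lra) ltac:(nra) Hc) as [S1 [E1 B1]].
  destruct (nnseries_sq_geom_bound c (1 - al ^ 2) r ltac:(lra) ltac:(nra) Hc) as [S2 [E2 B2]].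
  rewrite (Cf_finite m a x S1 S2 E1 E2); simpl; fold r al.
  pose proof (bohr_majorant_le_one m al r Hm ltac:(lra) ltac:(lra)).
  assert (Hco : 0 <= 1 / (1 + al) + r / (1 - r))
    by (apply Rplus_le_le_0_compat; apply Rdiv_le_0_compat; lra).
  assert ((1 / (1 + al) + r / (1 - r)) * S2
          <= (1 / (1 + al) + r / (1 - r)) * ((1 - al ^ 2) ^ 2 * r ^ 2 / (1 - r ^ 2)))
    by (apply Rmult_le_compat_l; lra).
  lra.
Qed.

Definition mobius (al : R) (z : C) : C := ((al - z) / (1 - al * z))%C.
Definition mobius_coef (al : R) (n : nat) : R :=
  match n with O => al | S k => - (1 - al ^ 2) * al ^ k end.
Definition mobius_series (al : R) (z : C) (L : nat) : C :=
  sum_n (fun n => (z ^ n * RtoC (mobius_coef al n))%C) L.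

Definition Omobius (al : R) (x : Oct) : Oct := Oslice (slice_dir x) (mobius al (slice_coord x)).
Definition Omobius_coef (al : R) (n : nat) : Oct := Oscal (mobius_coef al n) Oone.

Lemma mobius_denom_ge (al : R) (z : C) : 0 <= al < 1 -> Cmod z < 1 -> 1 - al <= Cmod (1 - al * z).
Proof.
  intros Ha Hz; pose proof (Cmod_triangle (1 - al * z) (al * z)) as H.
  replace (1 - al * z + al * z)%C with (RtoC 1) in H by ring.
  rewrite Cmod_1, Cmod_mult, Cmod_R, Rabs_pos_eq in H by lra.
  pose proof (Cmod_ge_0 z); nra.
Qed.

Lemma mobius_denom_neq0 (al : R) (z : C) : 0 <= al < 1 -> Cmod z < 1 -> (1 - al * z)%C <> 0.
Proof.
  intros Ha Hz E; pose proof (mobius_denom_ge al z Ha Hz) as H; rewrite E, Cmod_0 in H; lra.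
Qed.

Lemma mobius_series_err (al : R) (z : C) (L : nat) : (1 - al * z)%C <> 0 ->
  ((1 - al * z) * (mobius_series al z L - mobius al z))%C = ((1 - al ^ 2) * al ^ L * z ^ S L)%C.
Proof.
  intro Hnz; unfold mobius_series, mobius; induction L as [|L IHL].
  - rewrite sum_O; simpl; field; exact Hnz.
  - rewrite sum_Sn; change (plus ?u ?v) with (u + v)%C.
    replace ((1 - al * z) * (sum_n (fun n => (z ^ n * RtoC (mobius_coef al n))%C) L
               + z ^ S L * RtoC (mobius_coef al (S L)) - (al - z) / (1 - al * z)))%C
      with ((1 - al * z) * (sum_n (fun n => (z ^ n * RtoC (mobius_coef al n))%C) L
               - (al - z) / (1 - al * z))
            + (1 - al * z) * z ^ S L * RtoC (mobius_coef al (S L)))%C by ring.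
    rewrite IHL; simpl mobius_coef.
    rewrite !RtoC_mult, RtoC_opp, RtoC_minus, !RtoC_mult, RtoC_pow; simpl Cpow; ring.
Qed.

Lemma mobius_series_cvg (al : R) (z : C) : 0 <= al < 1 -> Cmod z < 1 ->
  is_lim_seq (fun L => Cmod (mobius_series al z L - mobius al z)) 0.
Proof.
  intros Ha Hz; pose proof (mobius_denom_ge al z Ha Hz) as Hd.
  apply (is_lim_seq_le_le (fun _ => 0) _ (fun L => (1 + al) * al ^ L)).
  - intro L; split; [apply Cmod_ge_0|].
    pose proof (f_equal Cmod (mobius_series_err al z L (mobius_denom_neq0 al z Ha Hz))) as E.
    rewrite <- !RtoC_pow, <- RtoC_minus, !Cmod_mult, Cmod_pow, !Cmod_R in E.
    rewrite (Rabs_pos_eq (1 - al ^ 2)), (Rabs_pos_eq (al ^ L)) in E by (try apply pow_le; nra).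
    set (D := Cmod (mobius_series al z L - mobius al z)) in *.
    assert (HD : 0 <= D) by apply Cmod_ge_0.
    assert (Hz1 : Cmod z ^ S L <= 1) by (apply pow_le_one; pose proof (Cmod_ge_0 z); lra).
    assert (0 <= (1 - al ^ 2) * al ^ L) by (apply Rmult_le_pos; [nra | apply pow_le; lra]).
    assert ((1 - al) * D <= Cmod (1 - al * z) * D) by (apply Rmult_le_compat_r; lra).
    assert ((1 - al ^ 2) * al ^ L * Cmod z ^ S L <= (1 - al ^ 2) * al ^ L)
      by (rewrite <- (Rmult_1_r ((1 - al ^ 2) * al ^ L)) at 2; apply Rmult_le_compat_l; lra).
    apply (Rmult_le_reg_l (1 - al)); [lra|].
    replace ((1 - al) * ((1 + al) * al ^ L)) with ((1 - al ^ 2) * al ^ L) by ring; lra.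
  - apply is_lim_seq_const.
  - replace (Finite 0) with (Rbar_mult (1 + al) 0) by (simpl; f_equal; ring).
    apply is_lim_seq_scal_l, is_lim_seq_geom; rewrite Rabs_pos_eq; lra.
Qed.

Lemma Cmod_mobius_le (al : R) (z : C) : 0 <= al < 1 -> Cmod z < 1 -> Cmod (mobius al z) <= 1.
Proof.
  intros Ha Hz; pose proof (mobius_denom_ge al z Ha Hz) as Hd.
  unfold mobius; rewrite Cmod_div by (apply mobius_denom_neq0; auto).
  apply (Rmult_le_reg_r (Cmod (1 - al * z))); [lra|].
  unfold Rdiv; rewrite Rmult_assoc, Rinv_l, Rmult_1_r, Rmult_1_l by lra.
  (* [|1 - al z|^2 - |al - z|^2 = (1 - al^2)(1 - |z|^2)] *)
  destruct z as [p s]; unfold Cmod in *; cbn [fst snd] in Hz.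
  rewrite <- sqrt_1 in Hz; apply sqrt_lt_0_alt in Hz.
  apply sqrt_le_1_alt; cbn [fst snd Cminus Cplus Cmult Copp RtoC].
  assert (0 <= (1 - al ^ 2) * (1 - p ^ 2 - s ^ 2)) by (apply Rmult_le_pos; nra).
  nra.
Qed.

Lemma Opsum_Oslice I (u : nat -> C) L :
  Opsum (fun n => Oslice I (u n)) L = Oslice I (sum_n u L).
Proof.
  induction L as [|L IHL]; cbn [Opsum]; [rewrite sum_O; reflexivity|].
  rewrite IHL, Oslice_add, sum_Sn; reflexivity.
Qed.

Lemma Omobius_regular al : 0 <= al < 1 -> slice_regular_ball (Omobius al) (Omobius_coef al).
Proof.
  intros Ha x Hx; unfold Oseries_to.
  pose proof (slice_dir_unit x) as HI.
  apply (is_lim_seq_ext (fun L => Cmod (mobius_series al (slice_coord x) L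
                                        - mobius al (slice_coord x)))).
  - intro L; unfold Omobius, mobius_series.
    rewrite (Opsum_ext _ (fun n => Oslice (slice_dir x)
                (slice_coord x ^ n * RtoC (mobius_coef al n))%C))
      by (intros n _; unfold Omobius_coef; rewrite (slice_decomp x) at 1;
          rewrite Oslice_pow, Oslice_mul_real by exact HI; reflexivity).
    rewrite Opsum_Oslice, Oslice_sub, Onorm_Oslice by exact HI; reflexivity.
  - apply mobius_series_cvg; [exact Ha | rewrite Onorm_slice_coord; exact Hx].
Qed.

Lemma Omobius_le_one al x : 0 <= al < 1 -> Onorm x < 1 -> Onorm (Omobius al x) <= 1.
Proof.
  intros Ha Hx; unfold Omobius; rewrite Onorm_Oslice by apply slice_dir_unit.
  apply Cmod_mobius_le; [exact Ha | rewrite Onorm_slice_coord; exact Hx].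
Qed.

Lemma rpow_ge al m : 0 < al -> 0 <= m -> 1 + m * (1 - 1 / al) <= rpow al m.
Proof.
  intros Hal Hm; unfold rpow; destruct (Req_EM_T al 0) as [E | _]; [lra|]; unfold Rpower.
  pose proof (exp_ineq1_le (m * ln al)).
  pose proof (ln_le_sub_one (1 / al) ltac:(apply Rdiv_lt_0_compat; lra)) as Hln.
  rewrite ln_div, ln_1 in Hln by lra.
  assert (m * (1 - 1 / al) <= m * ln al) by (apply Rmult_le_compat_l; lra).
  lra.
Qed.

Lemma bohr_sharp_scalar m r : 0 < m <= 1 -> m / (2 + m) < r < 1 ->
  exists al, 1 / 2 <= al < 1 /\ 1 < rpow al m + (1 - al ^ 2) * r / (1 - al * r).
Proof.
  intros Hm Hr; set (D := r * (2 + m) - m).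
  assert (HD : 0 < D).
  { destruct Hr as [Hr _]; apply (Rmult_lt_compat_r (2 + m)) in Hr; [|lra].
    replace (m / (2 + m) * (2 + m)) with m in Hr by (field; lra); unfold D; lra. }
  set (h := Rmin (1 / 2) (D / 8)).
  assert (Hh : 0 < h) by (apply Rmin_pos; lra).
  assert (h <= 1 / 2) by apply Rmin_l; assert (h <= D / 8) by apply Rmin_r.
  exists (1 - h); split; [lra|].
  pose proof (rpow_ge (1 - h) m ltac:(lra) ltac:(lra)).
  enough (0 < m * (1 - 1 / (1 - h)) + (1 - (1 - h) ^ 2) * r / (1 - (1 - h) * r)) by lra.
  assert (Hp1 : 0 < 1 - h) by lra; assert (Hp2 : 0 < 1 - (1 - h) * r) by nra.
  (* as [h -> 0] this behaves like [h (r (2 + m) - m) = h D] *)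
  replace (m * (1 - 1 / (1 - h)) + (1 - (1 - h) ^ 2) * r / (1 - (1 - h) * r))
    with (h * ((2 - h) * r * (1 - h) - m * (1 - (1 - h) * r)) / ((1 - h) * (1 - (1 - h) * r)))
    by (field; split; apply Rgt_not_eq; assumption).
  apply Rdiv_lt_0_compat; [apply Rmult_lt_0_compat; [lra|] | nra].
  assert (h * (3 * r + m * r) <= 4 * h) by (assert (r * m <= 1) by nra; nra).
  unfold D in *; nra.
Qed.

Lemma Cf_Omobius m al r : 0 <= al < 1 -> 0 < r < 1 ->
  Rbar_le (Finite (rpow al m + (1 - al ^ 2) * r / (1 - al * r)))
          (Cf m (Omobius_coef al) (Oscal r Oone)).
Proof.
  intros Hal Hr; set (x := Oscal r Oone).
  assert (Hx : Onorm x = r) by (apply Onorm_real; lra).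
  set (c n := Onorm (Omul (Opow x (S n)) (Omobius_coef al (S n)))).
  assert (Hc : forall n, c n = (al * r) ^ n * ((1 - al ^ 2) * r)).
  { intro n; unfold c, Omobius_coef; rewrite Onorm_mul, Onorm_pow, Hx, Onorm_scal, Onorm1.
    cbn [mobius_coef]; rewrite Rabs_left1, Rpow_mult_distr; [simpl; ring|].
    pose proof (pow_le al n (proj1 Hal)); assert (0 <= 1 - al ^ 2) by nra; nra. }
  assert (HS1 : nnseries c = Finite ((1 - al ^ 2) * r / (1 - al * r))).
  { apply is_lim_seq_unique.
    replace ((1 - al ^ 2) * r / (1 - al * r)) with (/ (1 - al * r) * ((1 - al ^ 2) * r))
      by (field; nra).
    apply (is_series_ext (fun n => (al * r) ^ n * ((1 - al ^ 2) * r))); [intro; symmetry; apply Hc|].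
    apply is_series_scal_r, is_series_geom; rewrite Rabs_pos_eq; nra. }
  assert (Hc_le : forall n, 0 <= c n <= (1 - al ^ 2) * r ^ S n).
  { intro n; rewrite Hc, Rpow_mult_distr; change (r ^ S n) with (r * r ^ n).
    pose proof (pow_le al n (proj1 Hal)); pose proof (pow_le_one al n ltac:(lra)).
    pose proof (pow_le r n ltac:(lra)); assert (0 <= 1 - al ^ 2) by nra.
    assert (0 <= (1 - al ^ 2) * r) by (apply Rmult_le_pos; lra).
    assert (0 <= r ^ n * ((1 - al ^ 2) * r)) by (apply Rmult_le_pos; lra).
    replace (al ^ n * r ^ n * ((1 - al ^ 2) * r)) with (al ^ n * (r ^ n * ((1 - al ^ 2) * r)))
      by ring.
    replace ((1 - al ^ 2) * (r * r ^ n)) with (1 * (r ^ n * ((1 - al ^ 2) * r))) by ring.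
    split; [apply Rmult_le_pos | apply Rmult_le_compat_r]; lra. }
  destruct (nnseries_sq_geom_bound c (1 - al ^ 2) r ltac:(lra) ltac:(nra) Hc_le)
    as [S2 [E2 B2]].
  rewrite (Cf_finite m (Omobius_coef al) x _ S2 HS1 E2); simpl.
  replace (Onorm (Omobius_coef al 0)) with al by (symmetry; apply Onorm_real; lra).
  rewrite Hx.
  assert (0 <= (1 / (1 + al) + r / (1 - r)) * S2)
    by (apply Rmult_le_pos; [apply Rplus_le_le_0_compat; apply Rdiv_le_0_compat|]; lra).
  lra.
Qed.

Lemma bohr_radius_sharp m r : 0 < m <= 1 -> m / (2 + m) < r < 1 ->
  exists (f : Oct -> Oct) (a : nat -> Oct),
    slice_regular_ball f a /\ (forall x, Onorm x < 1 -> Onorm (f x) <= 1) /\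
    exists x, Onorm x = r /\ Rbar_lt (Finite 1) (Cf m a x).
Proof.
  intros Hm Hr.
  assert (Hr0 : 0 < r) by (pose proof (Rdiv_lt_0_compat m (2 + m) ltac:(lra) ltac:(lra)); lra).
  destruct (bohr_sharp_scalar m r Hm Hr) as [al [Hal Hgt]].
  exists (Omobius al), (Omobius_coef al); split; [apply Omobius_regular; lra|].
  split; [intros; apply Omobius_le_one; auto; lra|].
  exists (Oscal r Oone); split; [apply Onorm_real; lra|].
  eapply Rbar_lt_le_trans; [|apply Cf_Omobius; lra]; exact Hgt.
Qed.

Theorem theorem1p3 (m : R) (hm0 : 0 < m) (hm1 : m <= 1) :
  (forall (f : Oct -> Oct) (a : nat -> Oct),
     slice_regular_ball f a ->
     (forall x : Oct, Onorm x < 1 -> Onorm (f x) <= 1) ->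
     forall x : Oct, Onorm x < 1 -> Onorm x <= m / (2 + m) ->
       Rbar_le (Cf m a x) (Finite 1))
  /\
  (forall r : R, m / (2 + m) < r -> r < 1 ->
     exists (f : Oct -> Oct) (a : nat -> Oct),
       slice_regular_ball f a /\
       (forall x : Oct, Onorm x < 1 -> Onorm (f x) <= 1) /\
       exists x : Oct, Onorm x = r /\ Rbar_lt (Finite 1) (Cf m a x)).
Proof.
  split.
  - intros f a Hf Hb x _ HR; exact (bohr_inequality m f a x (conj hm0 hm1) Hf Hb HR).
  - intros r Hr1 Hr2; exact (bohr_radius_sharp m r (conj hm0 hm1) (conj Hr1 Hr2)).
Qed.
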